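(* For every $i\ge0$, the number $M_i$ of pairwise non-isomorphic diverging rooted trees of depth at most $i$ equals $T(i)$.
   Context: The tower function is $T(0)=1$, $T(i)=2^{T(i-1)}$. A rooted tree $T_v$ is a finite tree with a distinguished root $v$; isomorphisms of rooted trees must map root to root; its depth is the maximum distance from the root to a vertex. For a vertex $u$, the descendants of $u$ are the vertices whose path to the root passes through $u$ (including $u$); for a child $w$ of $u$ (a neighbor of $u$ farther from the root), the $u$-branch is the subtree spanned by the descendants of $w$, rooted at $w$. A rooted tree is diverging if for every vertex $u$ all its $u$-branches are pairwise non-isomorphic as rooted trees. *)

From Stdlib Require Import List Permutation.
From mathcomp Require Import all_boot.

Set Implicit Arguments.
Unset Strict Implicit.
Unset Printing Implicit Defensive.

Fixpoint tower (i : nat) : nat :=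
  if i is i'.+1 then 2 ^ tower i' else 1.

(* A finite rooted tree, given by the (finite) list of the branches
   hanging below its root.  The order of the list is irrelevant up to
   isomorphism (see [riso]). *)
Inductive rtree : Type := Node of seq rtree.

Definition children (t : rtree) : seq rtree := let: Node s := t in s.

Inductive riso : rtree -> rtree -> Prop :=
  | riso_node (s t t' : seq rtree) :
      Permutation t t' -> Forall2 riso s t' -> riso (Node s) (Node t).

Fixpoint depth (t : rtree) : nat :=
  let: Node s := t in foldr (fun c m => maxn (depth c).+1 m) 0 s.

Inductive diverging : rtree -> Prop :=
  | diverging_node (s : seq rtree) :
      (forall i j, i < j < size s ->
         ~ riso (nth (Node [::]) s i) (nth (Node [::]) s j)) ->
      Forall diverging s -> diverging (Node s).

From Stdlib Require Import List Permutation.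
From mathcomp Require Import all_boot.

Set Implicit Arguments.
Unset Strict Implicit.
Unset Printing Implicit Defensive.

(* A diverging tree of depth at most i+1 is, up to isomorphism, a new root
   carrying a set of pairwise non-isomorphic diverging trees of depth at most
   i.  Conversely, grafting any such set below a new root gives a diverging
   tree, and different sets give non-isomorphic trees.  So grafting all
   subsets of a system of representatives for depth at most i yields one for
   depth at most i+1, and M_(i+1) = 2 ^ M_i. *)

Notation leaf := (Node [::]).

Lemma InP (T : eqType) (x : T) (s : seq T) : reflect (List.In x s) (x \in s).
Proof.
elim: s => [|y s IH]; first by right.
rewrite in_cons; apply: (iffP orP) => /= [[/eqP->|/IH]|[->|/IH]]; by [left|right].
Qed.

Lemma In_nthP (T : Type) (x0 x : T) (s : seq T) :
  List.In x s <-> exists2 j, j < size s & nth x0 s j = x.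
Proof.
elim: s => [|y s IH] /=; first by split=> [|[]].
split=> [[->|/IH[j j_lt <-]] | [[|j] /= j_lt xj]]; first by exists 0.
- by exists j.+1.
- by left.
- by right; apply/IH; exists j.
Qed.

Lemma perm_eq_Permutation (T : eqType) (s1 s2 : seq T) :
  perm_eq s1 s2 -> Permutation s1 s2.
Proof.
elim: s1 s2 => [|x s1 IH] s2 eq12.
  by move/perm_size: eq12 => /esym/size0nil ->.
have x_s2 : x \in s2 by rewrite -(perm_mem eq12) mem_head.
case/splitPr: x_s2 eq12 => s2a s2b.
rewrite perm_sym -cat1s perm_catCA /= perm_cons perm_sym => /IH.
exact: Permutation_cons_app.
Qed.

Lemma Forall2_In_l (A B : Type) (R : A -> B -> Prop) s t x :
  Forall2 R s t -> List.In x s -> exists2 y, List.In y t & R x y.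
Proof.
elim=> [//|a b s' t' Rab _ IH] /= [<-|/IH[y y_t Rxy]]; first by exists b; [left|].
by exists y; [right|].
Qed.

Lemma Forall2_nth (A B : Type) (R : A -> B -> Prop) x0 y0 s t j :
  Forall2 R s t -> j < size s -> R (nth x0 s j) (nth y0 t j).
Proof. by move=> F; elim: F j => [|a b s' t' Rab _ IH] [|j] //= /IH. Qed.

Lemma Forall2_impl_in (A B : Type) (R1 R2 : A -> B -> Prop) s t :
  (forall x y, List.In x s -> R1 x y -> R2 x y) -> Forall2 R1 s t -> Forall2 R2 s t.
Proof.
move=> R12 F; elim: F R12 => [|x y s' t' R1xy _ IH] R12; constructor.
  by apply: R12 R1xy; left.
by apply: IH => a b a_s'; apply: R12; right.
Qed.

Lemma Forall2_trans_in (A B C : Type) (R1 : A -> B -> Prop) (R2 : B -> C -> Prop)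
    (R3 : A -> C -> Prop) s t u :
  (forall x y z, List.In x s -> R1 x y -> R2 y z -> R3 x z) ->
  Forall2 R1 s t -> Forall2 R2 t u -> Forall2 R3 s u.
Proof.
move=> R123 F; elim: F R123 u => [|x y s' t' R1xy _ IH] R123 u F2.
  by inversion F2; constructor.
inversion_clear F2 as [|? z ? u' R2yz F2']; constructor.
  by apply: R123 R1xy R2yz; left.
by apply: IH F2' => a b c a_s'; apply: R123; right.
Qed.

Lemma Forall2_map_r (A B C : Type) (R : A -> C -> Prop) (f : B -> C) s t :
  Forall2 (fun a b => R a (f b)) s t -> Forall2 R s (map f t).
Proof. by elim=> //= a b s' t' Rab _ IH; constructor. Qed.

Lemma Forall2_choice (A B : Type) (R : A -> B -> Prop) s :
  (forall x, List.In x s -> exists y, R x y) -> exists t, Forall2 R s t.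
Proof.
elim: s => [|x s IH] Rs; first by exists [::].
have [y Rxy] := Rs x (or_introl erefl).
have [t Rst] := IH (fun x' x'_s => Rs x' (or_intror x'_s)).
by exists (y :: t); constructor.
Qed.

Lemma Forall2_uniq (A : Type) (B : eqType) (R : A -> B -> Prop) (x0 : A) s t :
  Forall2 R s t ->
  (forall j k y, j < k < size s -> R (nth x0 s j) y -> R (nth x0 s k) y -> False) ->
  uniq t.
Proof.
case: t => [//|y0 t] F R_inj.
have size_st : size s = size (y0 :: t) := Forall2_length F.
apply/(uniqP y0) => j k; rewrite !inE -size_st => j_lt k_lt eq_jk.
have Rj := Forall2_nth x0 y0 F j_lt; have Rk := Forall2_nth x0 y0 F k_lt.
rewrite eq_jk in Rj.
case: (ltngtP j k) => // [jk|kj]; exfalso.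
- by apply: (R_inj j k) Rj Rk; rewrite jk.
- by apply: (R_inj k j) Rk Rj; rewrite kj.
Qed.

Definition rtree_ind_in (P : rtree -> Prop)
    (IH : forall s, (forall c, List.In c s -> P c) -> P (Node s)) :
    forall t, P t :=
  fix loop t :=
    let: Node s := t in
    IH s ((fix loop_in s : forall c, List.In c s -> P c :=
             if s is d :: s' then
               fun c c_s => match c_s with
                            | or_introl d_c => eq_ind d P (loop d) c d_c
                            | or_intror c_s' => loop_in s' c c_s'
                            end
             else fun c c_s => False_ind (P c) c_s) s).

Lemma riso_NodeP s t :
  riso (Node s) (Node t) <-> exists2 t', Permutation t t' & Forall2 riso s t'.
Proof.
split=> [st | [t' perm_tt' F]]; last exact: riso_node perm_tt' F.
by inversion_clear st as [? ? t' perm_tt' F]; exists t'.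
Qed.

Lemma riso_sym x y : riso x y -> riso y x.
Proof.
elim/rtree_ind_in: x y => s IH [t] /riso_NodeP[t' perm_tt' F].
have F' : Forall2 riso t' s.
  by apply: Forall2_flip; apply: Forall2_impl_in F => c d c_s; apply: IH.
have [s' [perm_ss' F'']] := Permutation_Forall2 (Permutation_sym perm_tt') F'.
by apply/riso_NodeP; exists s'.
Qed.

Lemma riso_trans x y z : riso x y -> riso y z -> riso x z.
Proof.
elim/rtree_ind_in: x y z => s IH [t] [u].
move=> /riso_NodeP[t' perm_tt' F1] /riso_NodeP[u' perm_uu' F2].
have [u'' [perm_u'u'' F2']] := Permutation_Forall2 perm_tt' F2.
apply/riso_NodeP; exists u''; first exact: Permutation_trans perm_uu' perm_u'u''.
by apply: Forall2_trans_in F1 F2' => c d e c_s; apply: IH.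
Qed.

Lemma riso_Node_In s t c :
  riso (Node s) (Node t) -> List.In c s -> exists2 d, List.In d t & riso c d.
Proof.
case/riso_NodeP=> t' perm_tt' F /(Forall2_In_l F)[d d_t' cd].
by exists d => //; apply: Permutation_in (Permutation_sym perm_tt') d_t'.
Qed.

Definition iso_free (L : seq rtree) :=
  forall a b, a < b < size L -> ~ riso (nth leaf L a) (nth leaf L b).

Lemma iso_free_neq L p q : iso_free L -> p < size L -> q < size L -> p != q ->
  ~ riso (nth leaf L p) (nth leaf L q).
Proof.
move=> freeL p_lt q_lt; case: (ltngtP p q) => // [pq|qp] _ pq_iso.
- by apply: (freeL p q) pq_iso; rewrite pq.
- by apply: (freeL q p) (riso_sym pq_iso); rewrite qp.
Qed.

Lemma iso_free_map (T : eqType) (f : T -> rtree) (s : seq T) :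
  uniq s -> {in s &, forall x y, riso (f x) (f y) -> x = y} -> iso_free (map f s).
Proof.
move=> uniq_s f_inj a b /andP[ab]; rewrite size_map => b_lt.
have a_lt := ltn_trans ab b_lt.
case: s uniq_s f_inj a_lt b_lt => // x0 s uniq_s f_inj a_lt b_lt.
rewrite !(nth_map x0) // => /(f_inj _ _ (mem_nth x0 a_lt) (mem_nth x0 b_lt))/eqP.
by rewrite nth_uniq // (ltn_eqF ab).
Qed.

Lemma diverging_NodeP s :
  diverging (Node s) <-> iso_free s /\ (forall c, List.In c s -> diverging c).
Proof.
split=> [div_s | [free_s /Forall_forall]]; last exact: diverging_node.
by inversion_clear div_s as [? free_s all_div]; split=> //; apply/Forall_forall.
Qed.

Lemma depth_Node_ltS s k :
  depth (Node s) < k.+1 <-> (forall c, List.In c s -> depth c < k).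
Proof.
elim: s => [|c s IH] //=; rewrite ltnS geq_max.
split=> [/andP[c_k /IH s_k] d [<- // | /s_k //] | cs_k].
by apply/andP; split; [apply: cs_k; left | apply/IH => d d_s; apply: cs_k; right].
Qed.

Definition picked (L : seq rtree) (A : {set 'I_(size L)}) : seq rtree :=
  [seq nth leaf L q | q : 'I_(size L) <- enum A].

Definition graft (L : seq rtree) (A : {set 'I_(size L)}) : rtree := Node (picked A).

Definition grafts (L : seq rtree) : seq rtree := [seq graft A | A : {set 'I_(size L)}].

Lemma size_grafts L : size (grafts L) = 2 ^ size L.
Proof. by rewrite size_image -cardsT -powersetT card_powerset cardsT card_ord. Qed.

Lemma In_picked L (A : {set 'I_(size L)}) c :
  List.In c (picked A) <-> exists2 q, q \in A & c = nth leaf L q.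
Proof.
rewrite in_map_iff; split=> [[q [<- /InP]] | [q q_A ->]].
  by rewrite mem_enum; exists q.
by exists q; split=> //; apply/InP; rewrite mem_enum.
Qed.

Lemma iso_free_picked L (A : {set 'I_(size L)}) : iso_free L -> iso_free (picked A).
Proof.
move=> freeL; apply: iso_free_map (enum_uniq _) _ => p q _ _ pq_iso.
apply: ord_inj; case: (eqVneq (p : nat) q) => // neq.
by case: (iso_free_neq freeL (ltn_ord p) (ltn_ord q) neq).
Qed.

Lemma graft_riso_subset L (A B : {set 'I_(size L)}) :
  iso_free L -> riso (graft A) (graft B) -> A \subset B.
Proof.
move=> freeL AB; apply/subsetP => p p_A.
have /(riso_Node_In AB)[_ /In_picked[q q_B ->]] : List.In (nth leaf L p) (picked A).
  by apply/In_picked; exists p.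
case: (eqVneq (p : nat) q) => [/ord_inj -> // | neq].
by move/(iso_free_neq freeL (ltn_ord p) (ltn_ord q) neq).
Qed.

Lemma graft_riso_inj L (A B : {set 'I_(size L)}) :
  iso_free L -> riso (graft A) (graft B) -> A = B.
Proof.
move=> freeL AB; apply/eqP; rewrite eqEsubset.
by rewrite (graft_riso_subset freeL AB) (graft_riso_subset freeL (riso_sym AB)).
Qed.

Lemma iso_free_grafts L : iso_free L -> iso_free (grafts L).
Proof.
by move=> freeL; apply: iso_free_map (enum_uniq _) _ => A B _ _; apply: graft_riso_inj.
Qed.

Lemma diverging_graft L (A : {set 'I_(size L)}) :
  iso_free L -> (forall t, List.In t L -> diverging t) -> diverging (graft A).
Proof.
move=> freeL divL; apply/diverging_NodeP; split; first exact: iso_free_picked.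
by move=> _ /In_picked[q _ ->]; apply/divL/(In_nthP leaf); exists q.
Qed.

Lemma depth_graft L (A : {set 'I_(size L)}) k :
  (forall t, List.In t L -> depth t < k) -> depth (graft A) < k.+1.
Proof.
move=> L_k; apply/depth_Node_ltS => _ /In_picked[q _ ->].
by apply/L_k/(In_nthP leaf); exists q.
Qed.

Lemma riso_graft L s : iso_free s ->
    (forall c, List.In c s -> exists q : 'I_(size L), riso c (nth leaf L q)) ->
  exists A : {set 'I_(size L)}, riso (Node s) (graft A).
Proof.
move=> free_s /Forall2_choice[idx s_idx].
have uniq_idx : uniq idx.
  apply: (Forall2_uniq (x0 := leaf) s_idx) => j k q jk_lt jq kq.
  exact: free_s jk_lt (riso_trans jq (riso_sym kq)).
exists [set q in idx]; apply/riso_NodeP; exists [seq nth leaf L q | q : 'I_(size L) <- idx].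
  apply/Permutation_map/perm_eq_Permutation/uniq_perm => // [|q].
    exact: enum_uniq.
  by rewrite mem_enum inE.
exact: Forall2_map_r.
Qed.

Definition classifies (k : nat) (L : seq rtree) :=
  [/\ forall t, List.In t L -> diverging t /\ depth t < k,
      iso_free L &
      forall t, diverging t -> depth t < k -> exists2 u, List.In u L & riso t u].

Lemma classifies_nil : classifies 0 [::].
Proof. by split=> [//|a b|t _]; rewrite ltn0 ?andbF. Qed.

Lemma classifies_grafts k L : classifies k L -> classifies k.+1 (grafts L).
Proof.
case=> L_k freeL completeL; split.
- move=> _ /in_map_iff[A [<- _]]; split.
    by apply: diverging_graft => // u /L_k[].
  by apply: depth_graft => u /L_k[].
- exact: iso_free_grafts.
case=> s /diverging_NodeP[free_s div_s] /depth_Node_ltS s_k.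
have [A sA] : exists A, riso (Node s) (@graft L A).
  apply: riso_graft free_s _ => c c_s.
  have [_ /(In_nthP leaf)[q q_lt <-] cq] := completeL c (div_s c c_s) (s_k c c_s).
  by exists (Ordinal q_lt).
exists (graft A) => //; apply/in_map_iff; exists A; split=> //.
by apply/InP; rewrite mem_enum.
Qed.

(* Starting below depth 0, from the empty family, puts the tower's base case
   T(0) = 1 = 2 ^ 0 inside the recursion. *)
Definition reps (k : nat) : seq rtree := iter k grafts [::].

Lemma size_reps i : size (reps i.+1) = tower i.
Proof.
elim: i => [|i IH]; rewrite /reps iterS size_grafts //.
by rewrite -/(reps i.+1) IH.
Qed.

Lemma classifies_reps k : classifies k (reps k).
Proof. by elim: k => [|k IH]; [exact: classifies_nil | exact: classifies_grafts]. Qed.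

Theorem lemma6p10 (i : nat) :
  exists L : seq rtree,
    [/\ size L = tower i,
        (forall t, List.In t L -> diverging t /\ depth t <= i),
        (forall a b, a < b < size L ->
           ~ riso (nth (Node [::]) L a) (nth (Node [::]) L b)) &
        (forall t, diverging t -> depth t <= i ->
           exists2 u, List.In u L & riso t u)].
Proof.
have [reps_ok reps_free reps_complete] := classifies_reps i.+1.
by exists (reps i.+1); split=> //; apply: size_reps.
Qed.
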